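(* (Perfect completeness.) Consider the card-based Makaro protocol described in the context. If the prover $P$ knows a solution of the given Makaro puzzle and places the cell cards according to it, and the protocol is executed as specified, then the verifier $V$ always accepts.
   Context: Makaro puzzle: a rectangular grid of white and black cells. The white cells are partitioned into polyominoes called rooms; the size of a room is its number of cells. Some white cells already contain a number. Each black cell contains an arrow pointing to one of its (horizontally or vertically) adjacent white cells. A solution assigns a number to every empty white cell such that: (room condition) each room of size $p$ contains exactly the numbers $1,2,\dots,p$; (neighbor condition) two orthogonally adjacent white cells in different rooms contain different numbers; (arrow condition) for each black cell, the white cell its arrow points to contains the unique largest number among the (up to four) numbers in the white cells orthogonally adjacent to that black cell. Let $k$ be the size of the largest room. Cards: all cards have distinct front faces and identical backs. For each room $R$ of size $p$ there are cell cards $R_1,\dots,R_p$ (cards of different rooms are all distinct); there are helping cards $h_1,\dots,h_k$ and encoding cards $a_i,b_i,c_i,d_i$ for $i=1,\dots,2k-1$. A pile-scramble shuffle applied to a matrix of face-down cards permutes its columns by a uniformly random permutation unknown to all parties; a pile-shifting shuffle permutes the columns by a uniformly random cyclic shift unknown to all parties. Protocol. Setup: on each white cell of room $R$ containing (or, for empty cells, secretly assigned by $P$) the number $v$, $P$ places the face-down card $R_v$ (publicly for prefilled cells, secretly for the others). Room check, for each room $R$ of size $p$: put its cell cards in a fixed order in Row 1 of a $2\times p$ matrix and $h_1,\dots,h_p$ in Row 2; pile-scramble; reveal Row 1 and reject unless it is a permutation of $R_1,\dots,R_p$; turn these cards face down, pile-scramble again, reveal Row 2, rearrange the columns so Row 2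 reads $h_1,\dots,h_p$, and return the Row 1 cards to their cells. Conversion (cell with card $R_x$ in room $R$ of size $p$, target length $m\ge p$, card set $X\in\{a,b,c,d\}$): put the cell cards of $R$ in a fixed order in Row 1 of a matrix, with $R_x$ in column $i$; $h_1,\dots,h_p$ in Row 2; $X_1$ in Row 3, column $i$; $P$ secretly forms a uniformly random permutation $S$ of $X_2,\dots,X_m$ and fills the remaining $p-1$ cells of Row 3 from left to right with the first $p-1$ cards of $S$. Pile-scramble the $3\times p$ matrix; reveal Row 1 and rearrange columns so Row 1 reads $R_1,\dots,R_p$; remove Row 3 as a sequence $T$ and append the remaining $m-p$ cards of $S$ to obtain a face-down sequence of length $m$ (the encoding sequence). Then turn Row 1 face down, pile-scramble, reveal Row 2, rearrange so it reads $h_1,\dots,h_p$, and return the cell cards to their cells. Neighbor check, for each pair of adjacent white cells in different rooms (room sizes $p,q$, $m=\max(p,q)$): convert the first cell with set $a$ and the second with set $b$, both with length $m$; place the two sequences as Rows 1 and 2 of a $2\times m$ matrix; pile-scramble; reveal Row 1; let $a_1$ be in column $i$; reveal the Row 2 card in column $i$ and reject if it is $b_1$. Arrow check, for each black cell: let the pointed-to cell and the other (up to three) adjacent white cells be considered, and let $m$ be the maximum room size among them; convert the pointed-to cell with set $a$ and the others with sets $b,c,d$, all with length $2m-1$; place them as rows of a matrix (Row 1 from set $a$); apply a pile-shifting shuffle; reveal Row 1, let $a_1$ be in column $i$; reveal the cards of the other rows in columns $i,i+1,\dots,i+m-1$ (indices modulo $2m-1$) and reject if any of them is $b_1$, $c_1$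 or $d_1$. $V$ accepts if no check rejects. *)

From HB Require Import structures.
From mathcomp Require Import all_boot perm.
Set Implicit Arguments. Unset Strict Implicit. Unset Printing Implicit Defensive.

(* A cell is a pair (row, column) of natural numbers; rows grow downwards. *)
Definition cell := (nat * nat)%type.

Inductive dir := Up | Down | Left | Right.
Definition dirs := [:: Up; Down; Left; Right].

(* A cell is white and belongs to the room with the given label, or is
   black and carries an arrow in the given direction. *)
Inductive kind := White of nat | Black of dir.

Record puzzle := Puzzle {
  rows : nat;
  cols : nat;
  kindf : cell -> kind;          (* only meaningful on cells in the grid *)
  clue : cell -> option nat
}.

Definition in_grid (P : puzzle) (c : cell) := (c.1 < rows P) && (c.2 < cols P).

Definition cells (P : puzzle) : seq cell :=
  [seq (i, j) | i <- iota 0 (rows P), j <- iota 0 (cols P)].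

Definition step (c : cell) (d : dir) : option cell :=
  match d with
  | Up => if c.1 is i.+1 then Some (i, c.2) else None
  | Down => Some (c.1.+1, c.2)
  | Left => if c.2 is j.+1 then Some (c.1, j) else None
  | Right => Some (c.1, c.2.+1)
  end.

Definition nbrs (P : puzzle) (c : cell) : seq cell :=
  [seq d <- pmap (step c) dirs | in_grid P d].

Definition roomlab (P : puzzle) (c : cell) : option nat :=
  if in_grid P c then (if kindf P c is White r then Some r else None) else None.

Definition is_white (P : puzzle) (c : cell) : bool := roomlab P c != None.
Definition is_black (P : puzzle) (c : cell) : bool :=
  in_grid P c && (if kindf P c is Black _ then true else false).

Definition room_cells (P : puzzle) (r : nat) : seq cell :=
  [seq c <- cells P | roomlab P c == Some r].
Definition room_size (P : puzzle) (r : nat) : nat := size (room_cells P r).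
Definition rsize (P : puzzle) (c : cell) : nat := room_size P (odflt 0 (roomlab P c)).

Definition rooms (P : puzzle) : seq nat := undup (pmap (roomlab P) (cells P)).

Inductive room_path (P : puzzle) (r : nat) : cell -> cell -> Prop :=
| rp_refl c : roomlab P c = Some r -> room_path P r c c
| rp_step c d e : roomlab P c = Some r -> d \in nbrs P c ->
                  room_path P r d e -> room_path P r c e.

Definition wf_puzzle (P : puzzle) : Prop :=
  (forall c dr, in_grid P c -> kindf P c = Black dr ->
     exists w, step c dr = Some w /\ is_white P w) /\
  (forall r c d, roomlab P c = Some r -> roomlab P d = Some r -> room_path P r c d) /\
  (forall c v, clue P c = Some v -> is_white P c).

(* A solution: a number for every cell (irrelevant on black cells). *)
Definition is_solution (P : puzzle) (sol : cell -> nat) : Prop :=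
  (forall c v, clue P c = Some v -> sol c = v) /\
  (forall r, r \in rooms P ->
     perm_eq [seq sol c | c <- room_cells P r] (iota 1 (room_size P r))) /\
  (forall c d, is_white P c -> is_white P d -> d \in nbrs P c ->
     roomlab P c != roomlab P d -> sol c <> sol d) /\
  (forall c dr w, in_grid P c -> kindf P c = Black dr -> step c dr = Some w ->
     forall d, d \in nbrs P c -> is_white P d -> d != w -> sol d < sol w).

Inductive letter := La | Lb | Lc | Ld.

(* RC r v = cell card R_v of room r; HC i = helping card h_i;
   EC X i = encoding card X_i for X in {a,b,c,d}. *)
Inductive card := RC of nat & nat | HC of nat | EC of letter & nat.

Definition letter_code (x : letter) : nat :=
  match x with La => 0 | Lb => 1 | Lc => 2 | Ld => 3 end.
Definition code_letter (n : nat) : letter :=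
  match n with 0 => La | 1 => Lb | 2 => Lc | _ => Ld end.

Definition card_code (c : card) : nat * nat * nat :=
  match c with
  | RC r v => (0, r, v)
  | HC i => (1, i, 0)
  | EC x i => ((letter_code x).+2, i, 0)
  end.
Definition code_card (t : nat * nat * nat) : option card :=
  match t with
  | (0, r, v) => Some (RC r v)
  | (1, i, _) => Some (HC i)
  | (n.+2, i, _) => Some (EC (code_letter n) i)
  end.
Lemma card_codeK : pcancel card_code code_card.
Proof. by case=> // [] []. Qed.
HB.instance Definition _ := Equality.copy card (pcan_type card_codeK).

Definition dcard : card := HC 0.

(* A matrix of face-down cards is a list of rows. *)
Definition mat := seq (seq card).

(* Every shuffle / secret random permutation is drawn from a
   "tape": the k-th random permutation of size n is [tape k n].  The k-th
   pile-shifting shuffle shifts by [shifts k] (modulo the number of columns).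
   "V always accepts" means: V accepts for every tape. *)
Definition tape_t := nat -> forall n : nat, 'S_n.

Definition permcols (p : nat) (s : 'S_p) (M : mat) : mat :=
  [seq [seq nth dcard row (s j) | j <- enum 'I_p] | row <- M].

Definition shiftcols (L s : nat) (M : mat) : mat :=
  [seq [seq nth dcard row ((j + s) %% L) | j <- iota 0 L] | row <- M].

(* publicly rearrange the columns so that (revealed) row k reads t *)
Definition rearr (k : nat) (t : seq card) (M : mat) : mat :=
  let r := nth [::] M k in
  [seq [seq nth dcard row (index x r) | x <- t] | row <- M].

Definition return_cards (cs : seq cell) (row : seq card) (pl : cell -> card)
  : cell -> card :=
  fun c => if c \in cs then nth dcard row (index c cs) else pl c.

(* state: the cards lying on the cells, and the tape counter *)
Definition state := ((cell -> card) * nat)%type.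

Definition Rrow (r p : nat) := [seq RC r v | v <- iota 1 p].
Definition Hrow (p : nat) := [seq HC i | i <- iota 1 p].

(* room check for room r; returns (no rejection, new state) *)
Definition room_check (P : puzzle) (tape : tape_t) (r : nat) (st : state)
  : bool * state :=
  let: (pl, k) := st in
  let cs := room_cells P r in
  let p := size cs in
  let M1 := permcols (tape k p) [:: map pl cs; Hrow p] in
  let ok := perm_eq (nth [::] M1 0) (Rrow r p) in
  let M3 := rearr 1 (Hrow p) (permcols (tape k.+1 p) M1) in
  (ok, (return_cards cs (nth [::] M3 0) pl, k.+2)).

(* conversion of the card on cell c, target length m, card set X *)
Definition convert (P : puzzle) (tape : tape_t) (c : cell) (X : letter) (m : nat)
  (st : state) : seq card * state :=
  let: (pl, k) := st in
  let r := odflt 0 (roomlab P c) in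
  let cs := room_cells P r in
  let p := size cs in
  let i := index c cs in
  (* P's secret uniformly random permutation of X_2, ..., X_m *)
  let S := [seq EC X (tape k m.-1 j).+2 | j <- enum 'I_(m.-1)] in
  let Row3 := [seq if j == i then EC X 1
                   else nth dcard S (if j < i then j else j.-1) | j <- iota 0 p] in
  let M1 := permcols (tape k.+1 p) [:: map pl cs; Hrow p; Row3] in
  let M2 := rearr 0 (Rrow r p) M1 in
  let enc := nth [::] M2 2 ++ drop p.-1 S in
  let M3 := rearr 1 (Hrow p)
              (permcols (tape k.+2 p) [:: nth [::] M2 0; nth [::] M2 1]) in
  (enc, (return_cards cs (nth [::] M3 0) pl, k.+3)).

Definition nbr_check (P : puzzle) (tape : tape_t) (cd : cell * cell) (st : state)
  : bool * state :=
  let m := maxn (rsize P cd.1) (rsize P cd.2) in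
  let: (ea, st1) := convert P tape cd.1 La m st in
  let: (eb, st2) := convert P tape cd.2 Lb m st1 in
  let: (pl2, k2) := st2 in
  let M := permcols (tape k2 m) [:: ea; eb] in
  let i := index (EC La 1) (nth [::] M 0) in
  (nth dcard (nth [::] M 1) i != EC Lb 1, (pl2, k2.+1)).

Fixpoint converts (P : puzzle) (tape : tape_t) (dl : seq (cell * letter)) (L : nat)
  (st : state) : seq (seq card) * state :=
  match dl with
  | [::] => ([::], st)
  | (d, X) :: dl' =>
      let: (e, st1) := convert P tape d X L st in
      let: (es, st2) := converts P tape dl' L st1 in
      (e :: es, st2)
  end.

Definition arrow_check (P : puzzle) (tape : tape_t) (shifts : nat -> nat)
  (c : cell) (st : state) : bool * state :=
  match kindf P c with
  | White _ => (true, st)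
  | Black dr =>
    let w := odflt c (step c dr) in
    let ds := [seq d <- nbrs P c | is_white P d & d != w] in
    let m := foldr maxn 0 (map (rsize P) (w :: ds)) in
    let L := (2 * m).-1 in
    let: (ea, st1) := convert P tape w La L st in
    let: (es, st2) := converts P tape (zip ds [:: Lb; Lc; Ld]) L st1 in
    let: (pl2, k2) := st2 in
    let M := shiftcols L (shifts k2) (ea :: es) in
    let i := index (EC La 1) (nth [::] M 0) in
    let bad := has (fun row => has (fun t =>
                 nth dcard row ((i + t) %% L) \in [:: EC Lb 1; EC Lc 1; EC Ld 1])
                 (iota 0 m)) (behead M) in
    (~~ bad, (pl2, k2.+1))
  end.

Fixpoint run_list {A : Type} (f : A -> state -> bool * state) (l : seq A)
  (st : state) : bool * state :=
  match l with
  | [::] => (true, st)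
  | x :: l' =>
      let: (b, st1) := f x st in
      let: (b', st2) := run_list f l' st1 in
      (b && b', st2)
  end.

(* unordered pairs of adjacent white cells in different rooms, each once *)
Definition nbr_pairs (P : puzzle) : seq (cell * cell) :=
  [seq cd <- [seq (c, d) | c <- cells P, d <- pmap (step c) [:: Down; Right]]
   | [&& is_white P cd.1, is_white P cd.2 & roomlab P cd.1 != roomlab P cd.2]].

Definition black_cells (P : puzzle) : seq cell := [seq c <- cells P | is_black P c].

Definition setup (P : puzzle) (sol : cell -> nat) : cell -> card :=
  fun c => if roomlab P c is Some r then RC r (sol c) else dcard.

Definition protocol (P : puzzle) (sol : cell -> nat) (tape : tape_t)
  (shifts : nat -> nat) : bool :=
  let: (b1, st1) := run_list (room_check P tape) (rooms P) (setup P sol, 0) in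
  let: (b2, st2) := run_list (nbr_check P tape) (nbr_pairs P) st1 in
  let: (b3, _) := run_list (arrow_check P tape shifts) (black_cells P) st2 in
  [&& b1, b2 & b3].

(* An honest prover is never rejected, and no check moves a cell card for good.
   For the latter: before cards are returned, the columns are sorted by the revealed
   row h_1, ..., h_p; composed with the scrambles before it, this is a column
   permutation fixing a row of distinct cards, hence the identity.  For the former:
   by the room condition each revealed Row 1 is a permutation of R_1, ..., R_p, and
   converting a cell holding R_v gives a sequence whose only card with index 1 is
   X_1, at position v.  Scrambles and cyclic shifts move all rows alike, so the
   neighbour check sees b_1 under a_1 only if both numbers agree; in the arrow check,
   with v the pointed number and m the largest room size, the revealed positions
   v, ..., v + m - 1 stay below 2m - 1 without wrapping around and lie beyond the
   position u < v of every other number. *)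

From Pilot Require Import Defs.
From mathcomp Require Import all_boot perm zify.
From Stdlib Require Import FunctionalExtensionality.
Set Implicit Arguments. Unset Strict Implicit. Unset Printing Implicit Defensive.

Definition permrow (p : nat) (s : 'S_p) (row : seq Defs.card) : seq Defs.card :=
  [seq nth dcard row (s j) | j <- enum 'I_p].

Definition shiftrow (L sh : nat) (row : seq Defs.card) : seq Defs.card :=
  [seq nth dcard row ((j + sh) %% L) | j <- iota 0 L].

Definition encodes (X : letter) (v : nat) (enc : seq Defs.card) : Prop :=
  nth dcard enc v.-1 = EC X 1 /\ forall q Y, nth dcard enc q = EC Y 1 -> q = v.-1.

Section ColumnPermutations.
Variable p : nat.
Implicit Types (s g : 'S_p) (row h : seq Defs.card) (M : mat).

Lemma size_permrow s row : size (permrow s row) = p.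
Proof. by rewrite size_map size_enum_ord. Qed.

Lemma nth_permrow s row (j : 'I_p) : nth dcard (permrow s row) j = nth dcard row (s j).
Proof. by rewrite (nth_map j) ?size_enum_ord // nth_ord_enum. Qed.

Lemma map_nth_ord_enum row :
  size row = p -> [seq nth dcard row j | j : 'I_p <- enum 'I_p] = row.
Proof. by move=> Hs; rewrite -[RHS](mkseq_nth dcard) /mkseq Hs -val_enum_ord -map_comp. Qed.

Lemma permrow1 row : size row = p -> permrow (1%g : 'S_p) row = row.
Proof.
by move=> Hs; rewrite -[RHS](map_nth_ord_enum Hs); apply: eq_map => j; rewrite perm1.
Qed.

Lemma perm_permrow s row : size row = p -> perm_eq (permrow s row) row.
Proof.
move=> Hs; rewrite -[X in perm_eq _ X](map_nth_ord_enum Hs) /permrow.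
rewrite (map_comp (fun j : 'I_p => nth dcard row j) s); apply: perm_map.
apply: uniq_perm; rewrite ?enum_uniq ?(map_inj_uniq (@perm_inj _ s)) ?enum_uniq // => j.
by rewrite mem_enum; apply/mapP; exists (s^-1 j)%g; rewrite ?mem_enum ?permKV.
Qed.

Lemma permcolsE s M : permcols s M = map (permrow s) M.
Proof. by []. Qed.

Lemma permcols1 M : all (fun row => size row == p) M -> permcols (1%g : 'S_p) M = M.
Proof.
by move=> /allP Hall; rewrite -[RHS]map_id; apply/eq_in_map => row /Hall/eqP/permrow1.
Qed.

Lemma permcolsM s g M : permcols g (permcols s M) = permcols (g * s)%g M.
Proof.
rewrite !permcolsE -map_comp; apply: eq_map => row /=.
apply: (@eq_from_nth _ dcard); rewrite !size_permrow // => j Hj.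
by rewrite -[j]/(val (Ordinal Hj)) !nth_permrow permM.
Qed.

Lemma all_size_permcols s M : all (fun row => size row == p) (permcols s M).
Proof. by apply/allP => _ /mapP [row _ ->]; rewrite size_permrow. Qed.

Lemma permrow_fixed s h : size h = p -> uniq h -> permrow s h = h -> s = 1%g.
Proof.
move=> Hs Hu Eh; apply/permP => j; rewrite perm1; apply: val_inj.
have := congr1 (nth dcard ^~ j) Eh; rewrite nth_permrow => /eqP.
by rewrite nth_uniq ?Hs // => /eqP.
Qed.

Lemma nth_rearr k t M : k < size M -> {subset t <= nth [::] M k} ->
  nth [::] (rearr k t M) k = t.
Proof.
move=> Hk Ht; rewrite /rearr (nth_map [::]) //.
by rewrite -[RHS]map_id; apply/eq_in_map => x /Ht; apply: nth_index.
Qed.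

Lemma rearr_eq_permcols k t M :
  all (fun row => size row == p) M -> k < size M -> uniq (nth [::] M k) ->
  perm_eq t (nth [::] M k) -> exists g, rearr k t M = permcols g M.
Proof.
move=> /allP Hall Hk Hu Ht; set r := nth [::] M k in Hu Ht *.
have Hr : size r = p by apply/eqP/Hall; rewrite mem_nth.
have Hts : size t = p by rewrite (perm_size Ht).
have col_lt (j : 'I_p) : index (nth dcard t j) r < p.
  by rewrite -[X in _ < X]Hr index_mem -(perm_mem Ht) mem_nth ?Hts.
have col_inj : injective (fun j => Ordinal (col_lt j)).
  move=> i j /(congr1 (fun q : 'I_p => nth dcard r q)) /=.
  rewrite !nth_index -?(perm_mem Ht) ?mem_nth ?Hts // => /eqP.
  by rewrite nth_uniq ?Hts ?(perm_uniq Ht) // => /eqP /val_inj.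
exists (perm col_inj); apply/eq_in_map => row /Hall /eqP Hrow.
rewrite -{1}(map_nth_ord_enum Hts) -map_comp; apply: eq_map => j /=.
by rewrite permE.
Qed.

Lemma rearr_permcols_id k s M :
  all (fun row => size row == p) M -> k < size M -> uniq (nth [::] M k) ->
  rearr k (nth [::] M k) (permcols s M) = M.
Proof.
move=> Hall Hk Hu; set h := nth [::] M k in Hu *.
have Hh : size h = p by apply/eqP/(allP Hall); rewrite mem_nth.
have Hk' : k < size (permcols s M) by rewrite size_map.
have Hperm : perm_eq h (nth [::] (permcols s M) k).
  by rewrite (nth_map [::]) // perm_sym perm_permrow.
have Hu' : uniq (nth [::] (permcols s M) k) by rewrite -(perm_uniq Hperm).
have [g Eg] := rearr_eq_permcols (all_size_permcols s M) Hk' Hu' Hperm.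
have /permrow_fixed Egs : permrow (g * s)%g h = h.
  have Hsub : {subset h <= nth [::] (permcols s M) k} by move=> x; rewrite (perm_mem Hperm).
  have := nth_rearr Hk' Hsub.
  by rewrite Eg permcolsM (nth_map [::]).
by rewrite Eg permcolsM Egs // permcols1.
Qed.

Lemma encodes_permrow X s row (j : 'I_p) :
  encodes X (s j).+1 row -> encodes X j.+1 (permrow s row).
Proof.
move=> [Hj Hu]; split; first by rewrite nth_permrow.
move=> q Y; case: (ltnP q p) => Hq; last by rewrite nth_default ?size_permrow.
by rewrite -[q]/(val (Ordinal Hq)) nth_permrow => /Hu /val_inj /perm_inj ->.
Qed.

Lemma permrow_mark_column X v s row row' : v.-1 < p -> encodes X v row ->
  nth dcard (permrow s row') (index (EC X 1) (permrow s row)) = nth dcard row' v.-1.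
Proof.
move=> Hv [Hmark Hu].
have Hin : EC X 1 \in permrow s row.
  apply/(nthP dcard); exists (s^-1 (Ordinal Hv))%g; rewrite ?size_permrow //.
  by rewrite nth_permrow permKV.
have Hi : index (EC X 1) (permrow s row) < p by rewrite -index_mem size_permrow in Hin.
have := nth_index dcard Hin.
by rewrite -[index _ _]/(val (Ordinal Hi)) !nth_permrow => /Hu ->.
Qed.

End ColumnPermutations.

Lemma nth_shiftrow L sh row j : j < L ->
  nth dcard (shiftrow L sh row) j = nth dcard row ((j + sh) %% L).
Proof. by move=> Hj; rewrite (nth_map 0) ?size_iota // nth_iota. Qed.

Lemma shiftrow_mark_column X v L sh row row' t : v.-1 < L -> encodes X v row ->
  nth dcard (shiftrow L sh row') ((index (EC X 1) (shiftrow L sh row) + t) %% L) =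
  nth dcard row' ((v.-1 + t) %% L).
Proof.
move=> Hv [Hmark Hu]; have HL : 0 < L by lia.
have Hin : EC X 1 \in shiftrow L sh row.
  apply/(nthP dcard); exists ((v.-1 + (L - sh %% L)) %% L).
    by rewrite size_map size_iota ltn_pmod.
  rewrite nth_shiftrow ?ltn_pmod // modnDml.
  have -> : v.-1 + (L - sh %% L) + sh = (sh %/ L).+1 * L + v.-1.
    by rewrite {2}(divn_eq sh L) mulSn; have := ltn_pmod sh HL; lia.
  by rewrite modnMDl modn_small.
have Hi : index (EC X 1) (shiftrow L sh row) < L.
  by rewrite -index_mem size_map size_iota in Hin.
have Ei : (index (EC X 1) (shiftrow L sh row) + sh) %% L = v.-1.
  by apply: Hu; rewrite -nth_shiftrow // nth_index.
by rewrite nth_shiftrow ?ltn_pmod // modnDml addnAC -modnDml Ei.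
Qed.

Lemma encodes_insert X (S : seq Defs.card) (f : nat -> nat) i p :
  i < p -> (forall Y, EC Y 1 \notin S) ->
  encodes X i.+1 [seq if j == i then EC X 1 else nth dcard S (f j) | j <- iota 0 p].
Proof.
move=> Hi HS; split; first by rewrite (nth_map 0) ?size_iota // nth_iota // eqxx.
move=> q Y; case: (ltnP q p) => Hq; last by rewrite nth_default ?size_map ?size_iota.
rewrite (nth_map 0) ?size_iota // nth_iota // add0n; case: eqP => // _ ES.
case: (ltnP (f q) (size S)) => HfS; last by move: ES; rewrite nth_default.
by have := HS Y; rewrite -ES mem_nth.
Qed.

Lemma encodes_cat X v s t : v.-1 < size s -> (forall Y, EC Y 1 \notin t) ->
  encodes X v s -> encodes X v (s ++ t).
Proof.
move=> Hv Ht [Hmark Hu]; split; first by rewrite nth_cat Hv.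
move=> q Y; rewrite nth_cat; case: ifP => [_ /Hu //|Hq Et].
case: (ltnP (q - size s) (size t)) => Hqt; last by move: Et; rewrite nth_default.
by have := Ht Y; rewrite -Et mem_nth.
Qed.

Definition passes (pl : cell -> Defs.card) (f : state -> bool * state) : Prop :=
  forall k, exists k', f (pl, k) = (true, (pl, k')).

Lemma run_list_passes (A : eqType) (f : A -> state -> bool * state) l pl :
  {in l, forall x, passes pl (f x)} -> passes pl (run_list f l).
Proof.
elim: l => [|x l IHl] Hl k /=; first by exists k.
have [k1 ->] := Hl x (mem_head x l) k.
have [k2 ->] := IHl (fun y Hy => Hl y (mem_behead (s := x :: l) Hy)) k1.
by exists k2.
Qed.

Lemma return_cards_id (cs : seq cell) (pl : cell -> Defs.card) :
  return_cards cs (map pl cs) pl = pl.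
Proof.
apply: functional_extensionality => c; rewrite /return_cards.
by case: ifP => // Hc; rewrite (nth_map c) ?index_mem // nth_index.
Qed.

Lemma mem_unzip1_zip (S : eqType) (T : Type) (s : seq S) (t : seq T) x :
  x \in unzip1 (zip s t) -> x \in s.
Proof.
elim: s t => [|y s IHs] [|z t] //= /predU1P [->|/IHs Hx]; first exact: mem_head.
by rewrite inE Hx orbT.
Qed.

Section Grid.
Variable P : puzzle.

Lemma white_in_grid c : is_white P c -> in_grid P c.
Proof. by rewrite /is_white /roomlab; case: (in_grid P c). Qed.

Lemma mem_cells c : in_grid P c -> c \in cells P.
Proof. by case: c => i j /andP [Hi Hj]; apply: (allpairs_f pair); rewrite mem_iota. Qed.

Lemma roomlab_room_cells c r : c \in room_cells P r -> roomlab P c = Some r.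
Proof. by rewrite mem_filter => /andP [/eqP]. Qed.

Lemma white_room c : is_white P c ->
  exists r, [/\ roomlab P c = Some r, r \in rooms P & c \in room_cells P r].
Proof.
move=> Hw; have Hc := mem_cells (white_in_grid Hw).
move: Hw; rewrite /is_white; case E: (roomlab P c) => [r|] // _.
exists r; split => //; last by rewrite mem_filter E eqxx.
by rewrite /rooms mem_undup mem_pmap -E map_f.
Qed.

Lemma nbrs_down_right c d :
  d \in pmap (step c) [:: Down; Right] -> in_grid P d -> d \in nbrs P c.
Proof.
rewrite /nbrs mem_filter => Hd ->.
by case: c Hd => [[|i] [|j]]; rewrite /= !inE => /orP [] ->; rewrite ?orbT.
Qed.

End Grid.

Lemma size_Hrow p : size (Hrow p) = p.
Proof. by rewrite size_map size_iota. Qed.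

Lemma uniq_Rrow r p : uniq (Rrow r p).
Proof. by rewrite map_inj_uniq ?iota_uniq // => x y [->]. Qed.

Lemma uniq_Hrow p : uniq (Hrow p).
Proof. by rewrite map_inj_uniq ?iota_uniq // => x y [->]. Qed.

Lemma nth_Rrow r p q : q < p -> nth dcard (Rrow r p) q = RC r q.+1.
Proof. by move=> Hq; rewrite (nth_map 0) ?size_iota // nth_iota // add1n. Qed.

Section HonestProver.
Variables (P : puzzle) (sol : cell -> nat).
Hypothesis Hsol : is_solution P sol.

Lemma perm_setup_room r : r \in rooms P ->
  perm_eq (map (setup P sol) (room_cells P r)) (Rrow r (size (room_cells P r))).
Proof.
move=> Hr.
have -> : map (setup P sol) (room_cells P r) = map (RC r) (map sol (room_cells P r)).
  by rewrite -map_comp; apply/eq_in_map => c /roomlab_room_cells Ec; rewrite /setup Ec.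
by apply: perm_map; case: Hsol => _ [Hroom _]; apply: Hroom.
Qed.

Lemma uniq_setup_room r : r \in rooms P -> uniq (map (setup P sol) (room_cells P r)).
Proof. by move=> /perm_setup_room/perm_uniq ->; apply: uniq_Rrow. Qed.

Lemma sol_room_bounds r c : r \in rooms P -> c \in room_cells P r ->
  0 < sol c <= size (room_cells P r).
Proof.
move=> Hr Hc; case: Hsol => _ [Hroom _].
have : sol c \in iota 1 (room_size P r) by rewrite -(perm_mem (Hroom r Hr)) map_f.
by rewrite mem_iota /room_size addnC addn1 ltnS.
Qed.

Lemma sol_white_bounds c : is_white P c -> 0 < sol c <= rsize P c.
Proof. by case/white_room => r [Hr Hrr Hc]; rewrite /rsize Hr; apply: sol_room_bounds. Qed.

Lemma room_check_passes tape r : r \in rooms P -> passes (setup P sol) (room_check P tape r).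
Proof.
move=> Hr k; exists k.+2; rewrite /room_check.
set cs := room_cells P r; set p := size cs; set a := map (setup P sol) cs.
have Ha : size a = p by rewrite size_map.
have -> : perm_eq (nth [::] (permcols (tape k p) [:: a; Hrow p]) 0) (Rrow r p).
  exact: perm_trans (perm_permrow _ Ha) (perm_setup_room Hr).
rewrite permcolsM (@rearr_permcols_id _ 1 _ [:: a; Hrow p])
  /= ?Ha ?size_Hrow ?eqxx ?uniq_Hrow //.
by rewrite return_cards_id.
Qed.

Lemma convert_setup tape c X m k : is_white P c -> exists enc,
  convert P tape c X m (setup P sol, k) = (enc, (setup P sol, k.+3)) /\ encodes X (sol c) enc.
Proof.
case/white_room => r [Hr Hrr Hc]; rewrite /convert Hr [odflt _ _]/=.
set cs := room_cells P r; set p := size cs; set i := index c cs.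
set a := map (setup P sol) cs.
set S := [seq EC X _ | j <- _].
set Row3 := [seq (if _ == i then _ else _) | j <- _].
set M0 := [:: a; Hrow p; Row3].
have Ha : size a = p by rewrite size_map.
have Hau : uniq a by apply: uniq_setup_room.
have Hi : i < p by rewrite index_mem.
have Hperm : perm_eq (Rrow r p) (nth [::] (permcols (tape k.+1 p) M0) 0).
  rewrite perm_sym.
  exact: perm_trans (perm_permrow (tape k.+1 p) Ha) (perm_setup_room Hrr).
have [g Eg] : exists g : 'S_p, rearr 0 (Rrow r p) (permcols (tape k.+1 p) M0) = permcols g M0.
  have Hu : uniq (nth [::] (permcols (tape k.+1 p) M0) 0).
    by rewrite -(perm_uniq Hperm) uniq_Rrow.
  have [g' ->] := rearr_eq_permcols (k := 0) (all_size_permcols _ M0) isT Hu Hperm.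
  by exists (g' * tape k.+1 p)%g; rewrite permcolsM.
have Ega : permrow g a = Rrow r p.
  have Hsub : {subset Rrow r p <= nth [::] (permcols (tape k.+1 p) M0) 0}.
    by move=> x; rewrite (perm_mem Hperm).
  have := nth_rearr (k := 0) (M := permcols (tape k.+1 p) M0) isT Hsub.
  by rewrite Eg.
rewrite Eg -[[:: nth [::] _ 0; _]]/(permcols g [:: a; Hrow p]) permcolsM.
rewrite (@rearr_permcols_id _ 1 _ [:: a; Hrow p]) /= ?Ha ?size_Hrow ?eqxx ?uniq_Hrow //.
rewrite return_cards_id; eexists; split; first reflexivity.
have /andP [Hv0 Hvp] := sol_room_bounds Hrr Hc.
have Hv : (sol c).-1 < p by rewrite prednK.
have Egv : g (Ordinal Hv) = i :> nat.
  apply/eqP; rewrite -(nth_uniq dcard _ _ Hau) ?Ha //.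
  rewrite -nth_permrow Ega nth_Rrow // prednK // (nth_map c) ?index_mem // nth_index //.
  by rewrite /setup Hr.
have HS : forall Y, EC Y 1 \notin S by move=> Y; apply/mapP => [[j _ []]].
apply: encodes_cat; first by rewrite size_permrow.
  by move=> Y; apply: contra (HS Y); apply: mem_drop.
rewrite -(prednK Hv0) -[(sol c).-1]/(val (Ordinal Hv)); apply: encodes_permrow.
by rewrite Egv; apply: encodes_insert.
Qed.

Lemma converts_setup tape dl L k : {in unzip1 dl, forall d, is_white P d} ->
  exists es k', converts P tape dl L (setup P sol, k) = (es, (setup P sol, k')) /\
    {in es, forall e, exists2 d, d \in unzip1 dl & exists X, encodes X (sol d) e}.
Proof.
elim: dl k => [|[d X] dl IHdl] k Hdl; first by exists [::], k.
have [e [Ee He]] := convert_setup tape X L k (Hdl d (mem_head _ _)).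
have [es [k' [Ees Hes]]] :=
  IHdl k.+3 (fun d' Hd' => Hdl d' (mem_behead (s := d :: unzip1 dl) Hd')).
exists (e :: es), k'; split; first by cbn [converts]; rewrite Ee Ees.
move=> e'; rewrite inE => /predU1P [->|/Hes [d' Hd' HX]].
  by exists d; [apply: mem_head | exists X].
by exists d' => //; rewrite inE Hd' orbT.
Qed.

Lemma nbr_check_passes tape cd : cd \in nbr_pairs P ->
  passes (setup P sol) (nbr_check P tape cd).
Proof.
rewrite mem_filter => /andP [/and3P [Wx Wy Hxy] /allpairsPdep [x [y [_ Hy Ecd]]]] k.
subst cd; move: Wx Wy Hxy => /= Wx Wy Hxy.
have Hneq : sol x <> sol y.
  case: Hsol => _ [_ [Hnbr _]]; apply: Hnbr => //.
  exact: nbrs_down_right Hy (white_in_grid Wy).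
set m := maxn (rsize P x) (rsize P y).
have [ea [Ea Hea]] := convert_setup tape La m k Wx.
have [eb [Eb [_ Heb]]] := convert_setup tape Lb m k.+3 Wy.
have /andP [Hx0 Hxm] := sol_white_bounds Wx.
have /andP [Hy0 _] := sol_white_bounds Wy.
have Hxm' : (sol x).-1 < m by rewrite prednK // (leq_trans Hxm) ?leq_maxl.
eexists; rewrite /nbr_check -/m Ea Eb permcolsE [nth [::] _ 0]/= [nth [::] _ 1]/=.
rewrite (permrow_mark_column _ _ Hxm' Hea).
have -> : nth dcard eb (sol x).-1 != EC Lb 1 by apply/eqP => /Heb; lia.
by [].
Qed.

Lemma arrow_check_passes tape shifts :
  (forall b dr, in_grid P b -> kindf P b = Black dr ->
     exists w, step b dr = Some w /\ is_white P w) ->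
  {in black_cells P, forall c, passes (setup P sol) (arrow_check P tape shifts c)}.
Proof.
move=> Harrow c; rewrite mem_filter => /andP [/andP [Hg Hb] _] k.
rewrite /arrow_check; case E: (kindf P c) Hb => [//|dr] _.
have [w [Hst Ww]] := Harrow c dr Hg E.
rewrite Hst [odflt _ _]/=.
set ds := [seq d <- nbrs P c | is_white P d & d != w].
set m := foldr maxn 0 _.
set L := (2 * m).-1.
have Hds d : d \in unzip1 (zip ds [:: Lb; Lc; Ld]) ->
    [/\ is_white P d, d != w & d \in nbrs P c].
  by move/mem_unzip1_zip; rewrite mem_filter => /andP [/andP [-> ->] ->].
have [ea [Ea Hea]] := convert_setup tape La L k Ww.
have Wds : {in unzip1 (zip ds [:: Lb; Lc; Ld]), forall d, is_white P d} by move=> d /Hds [].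
have [es [k' [Ees Hes]]] := converts_setup tape L k.+3 Wds.
exists k'.+1; rewrite Ea Ees -[shiftcols _ _ _]/(map (shiftrow L (shifts k')) (ea :: es)).
rewrite [behead _]/= [nth [::] _ 0]/=.
have /andP [Hw0 Hwm] := sol_white_bounds Ww.
have {}Hwm : sol w <= m by apply: leq_trans Hwm (leq_maxl _ _).
have HwL : (sol w).-1 < L by rewrite /L; lia.
congr (_, _); apply/hasPn => _ /mapP [e He ->].
apply/hasPn => t; rewrite mem_iota add0n => /andP [_ Ht].
rewrite (shiftrow_mark_column _ _ _ HwL Hea) modn_small; last by rewrite /L; lia.
have [d /Hds [Wd Hdw Hdn] [X [_ Hde]]] := Hes e He.
have Hdw' : sol d < sol w by case: Hsol => _ [_ [_ Harr]]; apply: (Harr c dr w).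
have /andP [Hd0 _] := sol_white_bounds Wd.
by rewrite !inE; apply/negP => /or3P [] /eqP /Hde; lia.
Qed.

End HonestProver.

Unset Implicit Arguments.

Theorem lemma1 (P : puzzle) (sol : cell -> nat) :
  wf_puzzle P -> is_solution P sol ->
  forall (tape : tape_t) (shifts : nat -> nat), protocol P sol tape shifts = true.
Proof.
move=> Hwf Hsol tape shifts; rewrite /protocol.
have [k1 ->] := run_list_passes (room_check_passes Hsol tape) 0.
have [k2 ->] := run_list_passes (nbr_check_passes Hsol tape) k1.
have [k3 ->] := run_list_passes (arrow_check_passes Hsol tape shifts Hwf.1) k2.
by [].
Qed.
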